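(* Let $q=2v+1$ be a prime power with $v$ odd. The maximum number of pairwise inequivalent $(\mathbb F_q^\Box,3)$ Heffter rulers equals the maximum $n$ for which there exists an $(\mathbb F_q^\Box,3;n)$ Heffter difference packing.
   Context: $\mathbb F_q^\Box$ denotes the multiplicative group of nonzero squares of $\mathbb F_q$. Fix a group isomorphism $\phi:\mathbb F_q^\Box\to\mathbb Z_v$. An $(\mathbb F_q^\Box,k;n)$ Heffter difference packing is a family of $n$ $k$-subsets $B_1,\dots,B_n$ of $\mathbb F_q^\Box$ such that: the multiset of all differences $a-b$, with $(a,b)$ an ordered pair of distinct elements of a common $\phi(B_i)$, over all $i$, has no repeated element of $\mathbb Z_v$; $k$ divides $v$ and the elements of each $\phi(B_i)$ are pairwise distinct modulo $k$; each $B_i$ sums to $0$ in $\mathbb F_q$. An $(\mathbb F_q^\Box,k)$ Heffter ruler is a $k$-subset $B$ such that $\{B\}$ is an $(\mathbb F_q^\Box,k;1)$ Heffter difference packing. Two Heffter rulers $A,B$ are equivalent if $At=B$ for some nonzero $t\in\mathbb F_q$, where $At=\{at:a\in A\}$. *)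

From HB Require Import structures.
From mathcomp Require Import all_boot all_order all_algebra all_field.
Set Implicit Arguments. Unset Strict Implicit. Unset Printing Implicit Defensive.
Import GRing.Theory.
Local Open Scope ring_scope.

Section Heffter.
Variable F : finFieldType.

Definition nzsquares : {set F} :=
  [set x : F | (x != 0) && [exists y : F, y ^+ 2 == x]].

(* phi : F -> nat models the group isomorphism F_q^Box -> Z_v, with
   Z_v = {0,..,v-1} under addition mod v. Only its values on squares matter. *)
Definition sq_iso (v : nat) (phi : F -> nat) : Prop :=
  [/\ {in nzsquares, forall x, (phi x < v)%N},
      {in nzsquares &, injective phi},
      (forall m : nat, (m < v)%N -> exists2 x, x \in nzsquares & phi x = m)
    & {in nzsquares &, forall x y, phi (x * y) = ((phi x + phi y) %% v)%N}].

Definition zdiff (v a b : nat) : nat := ((a + (v - b)) %% v)%N.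

Definition is_HDP (v : nat) (phi : F -> nat) (k n : nat) (B : 'I_n -> {set F}) : bool :=
  [&& (k %| v)%N,
      [forall i, (B i \subset nzsquares) && (#|B i| == k)],
      [forall i, \sum_(x in B i) x == 0],
      [forall i, [forall a in B i, [forall b in B i,
          (a != b) ==> ((phi a %% k)%N != (phi b %% k)%N)]]]
    & [forall i, [forall j, [forall a, [forall b, [forall c, [forall d,
          [&& a \in B i, b \in B i, a != b, c \in B j, d \in B j, c != d
            & zdiff v (phi a) (phi b) == zdiff v (phi c) (phi d)]
          ==> [&& i == j, a == c & b == d]]]]]]]].

Definition has_HDP (v : nat) (phi : F -> nat) (k n : nat) : bool :=
  [exists B : {ffun 'I_n -> {set F}}, is_HDP v phi k B].

Definition is_ruler (v : nat) (phi : F -> nat) (k : nat) (B : {set F}) : bool :=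
  is_HDP v phi k (fun _ : 'I_1 => B).

Definition ruler_equiv (A B : {set F}) : bool :=
  [exists t : F, (t != 0) && (B == [set a * t | a in A])].

Definition has_inequiv_rulers (v : nat) (phi : F -> nat) (k n : nat) : bool :=
  [exists R : {ffun 'I_n -> {set F}},
     [forall i, is_ruler v phi k (R i)] &&
     [forall i, [forall j, (i != j) ==> ~~ ruler_equiv (R i) (R j)]]].

(* Maxima. Both families consist of pairwise distinct subsets of F, so
   n <= 2^#|F| always; the bound below is thus no restriction.
   Convention: the maximum of an empty set is 0. *)
Definition max_inequiv_rulers (v : nat) (phi : F -> nat) (k : nat) : nat :=
  \max_(n < (2 ^ #|F|).+1 | has_inequiv_rulers v phi k n) n.

Definition max_HDP (v : nat) (phi : F -> nat) (k : nat) : nat :=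
  \max_(n < (2 ^ #|F|).+1 | has_HDP v phi k n) n.

End Heffter.

From mathcomp Require Import all_boot all_order all_algebra all_field.
From mathcomp Require Import zify.
Set Implicit Arguments. Unset Strict Implicit. Unset Printing Implicit Defensive.
Import GRing.Theory.
Local Open Scope ring_scope.

(* A Heffter difference packing is the same thing as a family of Heffter
   rulers no two of which share a difference.  For zero-sum rulers of size 3,
   sharing a difference is the same as being equivalent.  If
   phi a - phi b = phi c - phi d with a, b in A and c, d in B, then t = c / a
   is a square with phi (b t) = phi d, hence b t = d; a 3-set summing to 0 is
   determined by two of its elements, so A t = B.  Conversely, if A t = B then
   t is a square (A and A t consist of squares), and multiplication by t shifts
   every phi-value by phi t, preserving differences.  The hypotheses on q are
   used only to make v positive. *)

Lemma zdiffK v x y : (y <= v)%N -> (zdiff v x y + y = x %[mod v])%N.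
Proof. by move=> hy; rewrite /zdiff modnDml -addnA subnK // modnDr. Qed.

Lemma eq_zdiff v x y x' y' : (0 < v)%N -> (y <= v)%N -> (y' <= v)%N ->
  (zdiff v x y == zdiff v x' y') = (x + y' == x' + y %[mod v])%N.
Proof.
move=> v_gt0 hy hy'.
rewrite -[zdiff v x y](@modn_small _ v) ?ltn_pmod //.
rewrite -[zdiff v x' y'](@modn_small _ v) ?ltn_pmod //.
rewrite -(eqn_modDr (y + y')) addnA -modnDml zdiffK // modnDml.
by rewrite addnCA -[((y + _) %% v)%N]modnDmr zdiffK // modnDmr [(y + x')%N]addnC.
Qed.

Lemma zdiff_modDr v x y z : (0 < v)%N -> (y <= v)%N ->
  zdiff v ((x + z) %% v) ((y + z) %% v) = zdiff v x y.
Proof.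
move=> v_gt0 hy; apply/eqP; rewrite eq_zdiff //; last exact/ltnW/ltn_pmod.
by rewrite modnDml modnDmr addnAC addnA.
Qed.

Lemma zdiff_inj v x y y' : (y < v)%N -> (y' < v)%N ->
  zdiff v x y = zdiff v x y' -> y = y'.
Proof.
move=> hy hy' /eqP; have v_gt0 := leq_ltn_trans (leq0n y) hy.
by rewrite eq_zdiff ?(ltnW hy) ?(ltnW hy') // eqn_modDl !modn_small // => /eqP.
Qed.

Lemma card3_sum0E (V : finZmodType) (S : {set V}) (c d : V) :
  #|S| = 3%N -> \sum_(x in S) x = 0 -> c \in S -> d \in S -> c != d ->
  S = [set c; d; -(c + d)].
Proof.
move=> S3 S_sum0 cS dS cd.
have : #|S :\ c :\ d| == 1%N.
  have := cardsD1 c S; have := cardsD1 d (S :\ c).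
  by rewrite cS !inE eq_sym cd dS S3 /=; lia.
case/cards1P => e Se.
have S_cde : S = [set c; d; e].
  apply/setP => x; move/setP/(_ x): Se; rewrite !inE.
  by case: eqVneq => [->|_]; case: eqVneq => [->|_] //= ->.
have : e \in S :\ c :\ d by rewrite Se set11.
rewrite !inE => /and3P[ed ec _].
move: S_sum0; rewrite S_cde -setUA big_setU1 /=; last by rewrite !inE negb_or cd eq_sym.
rewrite big_setU1 /= ?big_set1 ?inE 1?eq_sym // addrA => /eqP.
by rewrite addrC addr_eq0 => /eqP ->; rewrite setUA.
Qed.

Section NonzeroSquares.
Variable F : finFieldType.

Lemma nzsquares_neq0 (x : F) : x \in nzsquares F -> x != 0.
Proof. by rewrite inE => /andP[]. Qed.

Lemma nzsquaresM (x y : F) :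
  x \in nzsquares F -> y \in nzsquares F -> x * y \in nzsquares F.
Proof.
rewrite !inE => /andP[x0 /existsP[a /eqP xa]] /andP[y0 /existsP[b /eqP yb]].
by rewrite mulf_neq0 //=; apply/existsP; exists (a * b); rewrite exprMn xa yb.
Qed.

Lemma nzsquaresV (x : F) : x \in nzsquares F -> x^-1 \in nzsquares F.
Proof.
rewrite !inE => /andP[x0 /existsP[a /eqP xa]].
by rewrite invr_eq0 x0 /=; apply/existsP; exists a^-1; rewrite exprVn xa.
Qed.

Lemma nzsquaresMl (x y : F) :
  x \in nzsquares F -> (x * y \in nzsquares F) = (y \in nzsquares F).
Proof.
move=> xsq; apply/idP/idP => [xysq|]; last exact: nzsquaresM.
by rewrite -[y](mulKf (nzsquares_neq0 xsq)) nzsquaresM ?nzsquaresV.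
Qed.

Lemma nzsquares_div (x y : F) :
  x \in nzsquares F -> y \in nzsquares F -> x / y \in nzsquares F.
Proof. by move=> xsq /nzsquaresV; apply: nzsquaresM. Qed.

End NonzeroSquares.

Section HeffterRulers.
Variables (F : finFieldType) (v : nat) (phi : F -> nat).

Definition shares_diff (A B : {set F}) : bool :=
  [exists a, exists b, exists c, exists d,
    [&& a \in A, b \in A, a != b, c \in B, d \in B, c != d
      & zdiff v (phi a) (phi b) == zdiff v (phi c) (phi d)]].

Lemma is_HDPE k n (B : 'I_n -> {set F}) : (0 < n)%N ->
  is_HDP v phi k B =
    [forall i, is_ruler v phi k (B i)] &&
    [forall i, forall j, (i != j) ==> ~~ shares_diff (B i) (B j)].
Proof.
move=> n_gt0; apply/and5P/andP => [[kv sub sum res cross] | [rulers disj]].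
  split; apply/forallP => i.
    apply/and5P; split=> //; apply/forallP => i1.
    - exact: (forallP sub i).
    - exact: (forallP sum i).
    - exact: (forallP res i).
    apply/forallP => j1; apply/forallP => a; apply/forallP => b.
    apply/forallP => c; apply/forallP => d; apply/implyP => clash.
    move: cross => /forallP/(_ i)/forallP/(_ i)/forallP/(_ a)/forallP/(_ b).
    move=> /forallP/(_ c)/forallP/(_ d)/implyP/(_ clash).
    by rewrite (ord1 i1) (ord1 j1) !eqxx.
  apply/forallP => j; apply/implyP => ij; apply/existsP => -[a].
  move=> /existsP[b /existsP[c /existsP[d clash]]].
  move: cross => /forallP/(_ i)/forallP/(_ j)/forallP/(_ a)/forallP/(_ b).
  by move=> /forallP/(_ c)/forallP/(_ d)/implyP/(_ clash); rewrite (negbTE ij).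
case: n B n_gt0 rulers disj => // n B _ rulers disj.
have ruler i := and5P (forallP rulers i).
have [kv _ _ _ _] := ruler ord0.
split=> //; apply/forallP => i.
- by have [_ /forallP/(_ ord0)] := ruler i.
- by have [_ _ /forallP/(_ ord0)] := ruler i.
- by have [_ _ _ /forallP/(_ ord0)] := ruler i.
apply/forallP => j; apply/forallP => a; apply/forallP => b.
apply/forallP => c; apply/forallP => d; apply/implyP.
have [<- clash|ij clash] := eqVneq i j.
  have [_ _ _ _ /forallP/(_ ord0)/forallP/(_ ord0)] := ruler i.
  by move=> /forallP/(_ a)/forallP/(_ b)/forallP/(_ c)/forallP/(_ d)/implyP/(_ clash).
move: disj => /forallP/(_ i)/forallP/(_ j)/implyP/(_ ij)/negP[].
apply/existsP; exists a; apply/existsP; exists b.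
by apply/existsP; exists c; apply/existsP; exists d.
Qed.

Hypotheses (v_gt0 : (0 < v)%N) (phi_iso : sq_iso v phi).

Lemma zdiff_phiM a b t :
  a \in nzsquares F -> b \in nzsquares F -> t \in nzsquares F ->
  zdiff v (phi (a * t)) (phi (b * t)) = zdiff v (phi a) (phi b).
Proof.
case: phi_iso => phi_lt _ _ phiM asq bsq tsq.
by rewrite !phiM // zdiff_modDr // ltnW // phi_lt.
Qed.

Lemma zdiff_phi_inj a b b' : b \in nzsquares F -> b' \in nzsquares F ->
  zdiff v (phi a) (phi b) = zdiff v (phi a) (phi b') -> b = b'.
Proof.
case: phi_iso => phi_lt phi_inj _ _ bsq b'sq.
by move/zdiff_inj => /(_ (phi_lt _ bsq) (phi_lt _ b'sq)); apply: phi_inj.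
Qed.

Lemma ruler_equiv_shares_diff (A B : {set F}) :
  A \subset nzsquares F -> B \subset nzsquares F -> (1 < #|A|)%N ->
  ruler_equiv A B -> shares_diff A B.
Proof.
move=> /subsetP Asq /subsetP Bsq /card_gt1P[a [b [aA bA ab]]].
case/existsP => t /andP[t0 /eqP defB].
have atB : a * t \in B by rewrite defB; apply: imset_f.
have btB : b * t \in B by rewrite defB; apply: imset_f.
have [asq bsq] := (Asq a aA, Asq b bA).
have tsq : t \in nzsquares F by rewrite -(nzsquaresMl _ asq) Bsq.
apply/existsP; exists a; apply/existsP; exists b.
apply/existsP; exists (a * t); apply/existsP; exists (b * t).
by rewrite aA bA ab atB btB (inj_eq (mulIf t0)) ab zdiff_phiM // eqxx.
Qed.

Lemma shares_diff_ruler_equiv (A B : {set F}) :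
  A \subset nzsquares F -> B \subset nzsquares F -> #|A| = 3%N -> #|B| = 3%N ->
  \sum_(x in A) x = 0 -> \sum_(x in B) x = 0 ->
  shares_diff A B -> ruler_equiv A B.
Proof.
move=> /subsetP Asq /subsetP Bsq A3 B3 A0 B0.
case/existsP => a /existsP[b /existsP[c /existsP[d]]].
case/and5P => aA bA ab cB /and3P[dB cd /eqP same_diff].
pose t := c / a.
have [asq bsq] := (Asq a aA, Asq b bA).
have tsq : t \in nzsquares F := nzsquares_div (Bsq c cB) asq.
have at_c : a * t = c by rewrite mulrC divfK // nzsquares_neq0.
have bt_d : b * t = d.
  apply: (@zdiff_phi_inj c); [exact: nzsquaresM | exact: Bsq |].
  by rewrite -{1}at_c zdiff_phiM // same_diff.
apply/existsP; exists t; rewrite nzsquares_neq0 //=; apply/eqP.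
rewrite (card3_sum0E A3 A0 aA bA ab) (card3_sum0E B3 B0 cB dB cd).
by rewrite -!setUA !imsetU1 imset_set1 mulNr mulrDl at_c bt_d.
Qed.

Lemma ruler_equivE (A B : {set F}) : is_ruler v phi 3 A -> is_ruler v phi 3 B ->
  ruler_equiv A B = shares_diff A B.
Proof.
move=> /and5P[_ /forallP/(_ ord0)/andP[Asq /eqP A3] /forallP/(_ ord0)/eqP A0 _ _].
move=> /and5P[_ /forallP/(_ ord0)/andP[Bsq /eqP B3] /forallP/(_ ord0)/eqP B0 _ _].
apply/idP/idP; last exact: shares_diff_ruler_equiv.
by apply: ruler_equiv_shares_diff; rewrite ?A3.
Qed.

Lemma has_inequiv_rulersE n : (0 < n)%N ->
  has_inequiv_rulers v phi 3 n = has_HDP v phi 3 n.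
Proof.
move=> n_gt0; apply: eq_existsb => R; rewrite is_HDPE //.
apply: andb_id2l => /forallP rulers.
by apply: eq_forallb => i; apply: eq_forallb => j; rewrite ruler_equivE.
Qed.

End HeffterRulers.

Theorem proposition4p10 (F : finFieldType) (v : nat) (phi : F -> nat) :
  #|F| = (2 * v + 1)%N -> odd v -> sq_iso v phi ->
  max_inequiv_rulers v phi 3 = max_HDP v phi 3.
Proof.
move=> _ /odd_gt0 v_gt0 phi_iso.
rewrite /max_inequiv_rulers /max_HDP [LHS]big_mkcond [RHS]big_mkcond.
apply: eq_bigr => -[[|n] _] _ /=; first by case: ifP; case: ifP.
by rewrite has_inequiv_rulersE.
Qed.
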